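(* Let $G=(V,E,w)$ be a finite undirected graph with positive vertex weights and $v\in V$, and run the confinement procedure from $v$ (with any choice of extending children at each step). (a) If $v$ is unconfined, then $v$ is sheathed (there is an MWIS of $G$ not containing $v$), and $\alpha_w(G[V\setminus\{v\}])=\alpha_w(G)$. (b) If $v$ is confined with confining set $S_v$, then either $v$ is sheathed or $S_v$ is contained in every MWIS of $G$. Moreover, if some $u\in S_v$ is also confined, with confining set $S_u$, and $v\in S_u$, then $\{u,v\}$ is a simultaneous set.
   Context: $G=(V,E,w)$: finite simple undirected graph, $w:V\to\mathbb{R}^{+}$, $w(S)=\sum_{x\in S}w(x)$. MWIS = maximum weight independent set; MWVC = minimum weight vertex cover. $N(S)=(\bigcup_{x\in S}N(x))\setminus S$, $N[S]=N(S)\cup S$; $G[S]$ is the induced subgraph, $\alpha_w(G[S])$ the maximum weight of an independent set of $G[S]$ ($0$ if $S=\emptyset$). A vertex is sheathed if it lies in some MWVC (equivalently, some MWIS avoids it). A set $X$ is a simultaneous set if either $X$ is contained in some MWIS or $X$ is contained in some MWVC. Child / extending child: for an independent set $S$, a vertex $u\in N(S)$ with $w(u)\ge w(S\cap N(u))$ is a child of $S$; a child $u$ is an extending child if there is exactly one independent set $S^*\subseteq N(u)\setminus N[S]$ with $w(u)<w(S\cap N(u))+w(S^* )$, and this $S^*$ is called a satellite set of $S$. Confinement procedure from $v$: start with $S:=\{v\}$ and repeat: (i) while $S$ has an extending child, add its satellite set to $S$; (ii) if some child $u$ of $S$ satisfies $w(u)\ge w(S\cap N(u))+\alpha_w(G[N(u)\setminus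 N[S]])$, halt and call $v$ unconfined; (iii) if no child of $S$ is an extending child, halt, call $v$ confined and call $S_v:=S$ its confining set. *)

From mathcomp Require Import all_boot all_order all_algebra.
Set Implicit Arguments. Unset Strict Implicit. Unset Printing Implicit Defensive.
Import Order.TTheory GRing.Theory Num.Theory.
Local Open Scope ring_scope.

(* A finite simple undirected graph is a symmetric irreflexive relation
   [e : rel T] on a finite vertex type [T]; weights are [w : T -> R]. *)
Section Graph.
Variables (T : finType) (R : realFieldType) (e : rel T) (w : T -> R).

Definition wt (S : {set T}) : R := \sum_(x in S) w x.

Definition nbr (x : T) : {set T} := [set y | e x y].

Definition onbhd (S : {set T}) : {set T} :=
  (\bigcup_(x in S) nbr x) :\: S.
Definition cnbhd (S : {set T}) : {set T} := onbhd S :|: S.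

Definition independent (S : {set T}) : bool :=
  [forall x in S, forall y in S, ~~ e x y].

Definition vertex_cover (C : {set T}) : bool :=
  [forall x, forall y, e x y ==> (x \in C) || (y \in C)].

Definition alpha_w (X : {set T}) : R :=
  \big[Num.max/0]_(I : {set T} | (I \subset X) && independent I) wt I.

Definition MWIS (I : {set T}) : Prop :=
  independent I /\ forall J, independent J -> wt J <= wt I.

Definition MWVC (C : {set T}) : Prop :=
  vertex_cover C /\ forall D, vertex_cover D -> wt C <= wt D.

Definition sheathed (v : T) : Prop := exists C, MWVC C /\ v \in C.

Definition simultaneous (X : {set T}) : Prop :=
  (exists I, MWIS I /\ X \subset I) \/ (exists C, MWVC C /\ X \subset C).

Definition child (S : {set T}) (u : T) : Prop :=
  u \in onbhd S /\ wt (S :&: nbr u) <= w u.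

Definition sat_cand (S : {set T}) (u : T) (S' : {set T}) : Prop :=
  [/\ independent S', S' \subset nbr u :\: cnbhd S
    & w u < wt (S :&: nbr u) + wt S'].

Definition extending_child_with (S : {set T}) (u : T) (Ss : {set T}) : Prop :=
  child S u /\ sat_cand S u Ss /\ forall S', sat_cand S u S' -> S' = Ss.

Definition extending_child (S : {set T}) (u : T) : Prop :=
  exists Ss, extending_child_with S u Ss.

(* Sets reachable by step (i) of the confinement procedure from v,
   for some sequence of choices of extending children. *)
Inductive conf_reach (v : T) : {set T} -> Prop :=
  | conf_start : conf_reach v [set v]
  | conf_step S u Ss : conf_reach v S -> extending_child_with S u Ss ->
      conf_reach v (S :|: Ss).

(* A terminated run of step (i): no extending child remains. *)
Definition conf_final (v : T) (S : {set T}) : Prop :=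
  conf_reach v S /\ forall u, ~ extending_child S u.

Definition unconf_test (S : {set T}) : Prop :=
  exists u, child S u /\
    wt (S :&: nbr u) + alpha_w (nbr u :\: cnbhd S) <= w u.

(* The run from v ending at S declares v unconfined / confined (with S_v = S). *)
Definition unconfined_run (v : T) (S : {set T}) : Prop :=
  conf_final v S /\ unconf_test S.
Definition confined_run (v : T) (S : {set T}) : Prop :=
  conf_final v S /\ ~ unconf_test S.

End Graph.

(* The whole argument rests on one exchange operation: for an MWIS I and a
   vertex u, the set I[u] = u + (I \ N(u)) is independent, and it is again an
   MWIS as soon as w(u) dominates the weight of I inside N(u).  If S lies in
   I and u is a child of S, that weight is w(S /\ N(u)) plus the weight of the
   "satellite trace" of I, its vertices in N(u) \ N[S].
   - For an extending child u whose satellite set is not inside I, uniqueness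
     of the satellite set forces the trace to be light, so I[u] is an MWIS;
     it meets the set produced by the run strictly less than I does.
     Descending on that intersection shows: if an MWIS contains v, then either
     it contains the final set S_v, or some MWIS avoids v and meets S_v only
     inside the original one (lemma [reach_MWIS]).
   - For a child passing the unconfinement test, the trace is bounded by
     alpha_w(G[N(u) \ N[S]]), so I[u] is an MWIS that misses a vertex of S. *)

From mathcomp Require Import all_boot all_order all_algebra.
From Stdlib Require Import Classical.
Import Order.TTheory GRing.Theory Num.Theory.
Set Implicit Arguments. Unset Strict Implicit. Unset Printing Implicit Defensive.
Local Open Scope ring_scope.

Section Basics.
Variables (T : finType) (R : realFieldType) (e : rel T) (w : T -> R).
Hypothesis w_pos : forall x, 0 < w x.

Lemma independentP (S : {set T}) :
  reflect (forall x y, x \in S -> y \in S -> ~~ e x y) (independent e S).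
Proof.
apply: (iffP forallP) => [H x y xS yS | H x].
  by move: (H x); rewrite xS => /forallP/(_ y); rewrite yS.
by apply/implyP => xS; apply/forallP => y; apply/implyP; apply: H.
Qed.

Lemma independentS (A B : {set T}) :
  A \subset B -> independent e B -> independent e A.
Proof.
move=> /subsetP AB /independentP IB.
by apply/independentP => x y /AB xB /AB; apply: IB.
Qed.

Lemma onbhdP (S : {set T}) x :
  reflect (x \notin S /\ exists2 s, s \in S & e s x) (x \in onbhd e S).
Proof.
rewrite /onbhd inE; apply: (iffP andP) => [[xS /bigcupP [s sS]] | [xS [s sS esx]]].
  by rewrite inE => esx; split => //; exists s.
by split => //; apply/bigcupP; exists s; rewrite ?inE.
Qed.

Lemma wt_ge0 (S : {set T}) : 0 <= wt w S.
Proof. by apply: sumr_ge0 => x _; apply: ltW. Qed.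

Lemma wt_setC (S : {set T}) : wt w (~: S) = wt w setT - wt w S.
Proof. by rewrite /wt [X in _ = X - _](big_setID S) setTI setTD addrC addKr. Qed.

Lemma vertex_coverE (C : {set T}) : vertex_cover e C = independent e (~: C).
Proof.
apply/forallP/independentP => [H x y | H x].
  rewrite !inE => xC yC; apply/negP => exy.
  by move: (H x) => /forallP/(_ y)/implyP/(_ exy); rewrite (negbTE xC) (negbTE yC).
apply/forallP => y; apply/implyP => exy; apply/norP => -[xC yC].
by move: (H x y); rewrite !inE xC yC exy => /(_ isT isT).
Qed.

(* Complementation turns maximum weight independent sets into minimum weight
   vertex covers, since w(~: I) = w(V) - w(I). *)
Lemma MWIS_setC (I : {set T}) : MWIS e w I -> MWVC e w (~: I).
Proof.
move=> [II maxI]; split; first by rewrite vertex_coverE setCK.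
move=> D; rewrite vertex_coverE => /maxI leDI.
by rewrite -[D]setCK (wt_setC (~: D)) wt_setC lerB.
Qed.

Lemma sheathed_of_MWIS (I : {set T}) v :
  MWIS e w I -> v \notin I -> sheathed e w v.
Proof. by move=> MI vI; exists (~: I); split; [apply: MWIS_setC | rewrite inE]. Qed.

Lemma MWIS_exists : exists I, MWIS e w I.
Proof.
have I0 : independent e set0 by apply/independentP => x y; rewrite inE.
have [I II maxI] := @arg_maxP _ R _ set0 (independent e) (wt w) I0.
by exists I; split.
Qed.

Lemma alpha_w_ge (X J : {set T}) :
  independent e J -> J \subset X -> wt w J <= alpha_w e w X.
Proof. by move=> IJ JX; apply: le_bigmax_cond; rewrite JX IJ. Qed.

Lemma alpha_w_MWIS (X K : {set T}) :
  MWIS e w K -> K \subset X -> alpha_w e w X = wt w K.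
Proof.
move=> [IK maxK] KX; apply/le_anti; rewrite alpha_w_ge // andbT.
by apply: bigmax_le; [apply: wt_ge0 | move=> J /andP [_ /maxK]].
Qed.

End Basics.

Section Exchange.
Variables (T : finType) (R : realFieldType) (e : rel T) (w : T -> R).
Hypotheses (e_sym : symmetric e) (e_irr : irreflexive e).

Definition exchange (I : {set T}) (u : T) : {set T} := u |: (I :\: nbr e u).

(* The part of I that could serve as a satellite set of S at u:
   the vertices of I in N(u) \ N[S]. *)
Definition satellite_trace (S I : {set T}) (u : T) : {set T} :=
  (I :&: nbr e u) :\: cnbhd e S.

Lemma satellite_trace_sub (S I : {set T}) u :
  satellite_trace S I u \subset I /\
  satellite_trace S I u \subset nbr e u :\: cnbhd e S.
Proof.
split; apply/subsetP => x; rewrite !in_setD in_setI => /and3P [xS xI xN] //.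
by rewrite xS xN.
Qed.

Lemma onbhd_notin (S I : {set T}) u :
  independent e I -> S \subset I -> u \in onbhd e S -> u \notin I.
Proof.
move=> /independentP II /subsetP SI /onbhdP [_ [s /SI sI esu]].
by apply/negP => /(II _ _ sI); rewrite esu.
Qed.

Lemma exchange_independent (I : {set T}) u :
  independent e I -> independent e (exchange I u).
Proof.
move=> /independentP II; apply/independentP => x y; rewrite !inE.
case/orP => [/eqP -> | /andP [eux xI]]; case/orP => [/eqP -> | /andP [euy yI]].
- by rewrite e_irr.
- exact: euy.
- by rewrite e_sym.
- exact: II.
Qed.

Lemma exchange_drops (I : {set T}) u s : e u s -> s \notin exchange I u.
Proof.
move=> eus; rewrite !inE eus /= orbF.
by apply/eqP => su; move: eus; rewrite su e_irr.
Qed.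

Lemma wt_nbr_split (S I : {set T}) u : independent e I -> S \subset I ->
  wt w (I :&: nbr e u) = wt w (S :&: nbr e u) + wt w (satellite_trace S I u).
Proof.
move=> II SI; rewrite /wt (big_setID S) -!/(wt w _).
rewrite setIC setIA (setIidPl SI); congr (_ + _); congr (wt w _).
apply/setP => x; rewrite /satellite_trace /cnbhd !in_setD in_setU.
case: (boolP (x \in S)) => xS; rewrite ?orbT ?orbF //=.
case: (boolP (x \in I :&: nbr e u)) => xIN; rewrite ?andbF // andbT.
move: xIN; rewrite in_setI => /andP [xI _].
by apply/esym/negP => /(onbhd_notin II SI); rewrite xI.
Qed.

Lemma exchange_MWIS (S I : {set T}) u :
  MWIS e w I -> S \subset I -> u \in onbhd e S ->
  wt w (S :&: nbr e u) + wt w (satellite_trace S I u) <= w u ->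
  MWIS e w (exchange I u).
Proof.
move=> [II maxI] SI uNS le_u; split; first exact: exchange_independent.
move=> J /maxI /le_trans; apply.
rewrite /wt (big_setID (nbr e u)) big_setU1 -!/(wt w _) /=; last first.
  by rewrite in_setD negb_and (onbhd_notin II SI uNS) orbT.
by rewrite (wt_nbr_split u II SI) lerD2r.
Qed.

(* Step (i) in terms of an MWIS I containing S: if the satellite set of the
   extending child u is not inside I, then the trace of I is not a satellite
   candidate, so u outweighs it and I[u] is an MWIS. *)
Lemma exchange_extending (S I Ss : {set T}) u :
  MWIS e w I -> S \subset I -> extending_child_with e w S u Ss ->
  ~~ (Ss \subset I) -> MWIS e w (exchange I u).
Proof.
move=> MI SI [[uNS _] [_ uniqSs]] SsI; apply: (exchange_MWIS (S := S)) => //.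
have [trI trN] := satellite_trace_sub S I u.
rewrite leNgt; apply/negP => lt_u.
have cand : sat_cand e w S u (satellite_trace S I u).
  by split => //; apply: independentS trI (proj1 MI).
by move: SsI; rewrite -(uniqSs _ cand) trI.
Qed.

Lemma exchange_unconfined (S I : {set T}) u :
  MWIS e w I -> S \subset I -> child e w S u ->
  wt w (S :&: nbr e u) + alpha_w e w (nbr e u :\: cnbhd e S) <= w u ->
  MWIS e w (exchange I u).
Proof.
move=> MI SI [uNS _] le_u; apply: (exchange_MWIS (S := S)) => //; apply: le_trans le_u.
have [trI trN] := satellite_trace_sub S I u.
by rewrite lerD2l alpha_w_ge // (independentS trI (proj1 MI)).
Qed.

End Exchange.

Section Descent.
Variables (T : finType) (R : realFieldType) (e : rel T) (w : T -> R).
Hypotheses (e_sym : symmetric e) (e_irr : irreflexive e).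

(* Every set produced by step (i) is independent: a satellite set lies
   outside N[S] and is itself independent. *)
Lemma reach_independent v (S : {set T}) : conf_reach e w v S -> independent e S.
Proof.
elim=> [|{}S u Ss _ /independentP IS [_ [[/independentP ISs SsN _] _]]].
  by apply/independentP => x y /set1P -> /set1P ->; rewrite e_irr.
have cross x y : x \in S -> y \in Ss -> ~~ e x y.
  move=> xS /(subsetP SsN); rewrite /cnbhd !in_setD in_setU negb_or.
  case/andP=> /andP [yNS yS] _; apply/negP => exy.
  by move/negP: yNS; apply; apply/onbhdP; split=> //; exists x.
apply/independentP => x y /setUP [xS | xSs] /setUP [yS | ySs].
- exact: IS.
- exact: cross.
- by rewrite e_sym; apply: cross.
- exact: ISs.
Qed.

Lemma exchange_proper (X I : {set T}) u s : independent e X ->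
  s \in X -> s \in I -> e u s -> exchange e I u :&: X \proper I :&: X.
Proof.
move=> /independentP IX sX sI eus.
have uX : u \notin X by apply/negP => /IX /(_ sX); rewrite eus.
apply/properP; split.
  apply/subsetP => x /setIP [/setU1P [xu | /setDP [xI _]] xX].
    by move: uX; rewrite -xu xX.
  by rewrite inE xI.
exists s; first by rewrite inE sI sX.
by rewrite in_setI (negbTE (exchange_drops e_irr I eus)).
Qed.

Lemma reach_descent v (X S : {set T}) : conf_reach e w v S ->
  S \subset X -> independent e X -> forall I, MWIS e w I -> v \in I ->
  S \subset I \/ exists J, MWIS e w J /\ J :&: X \proper I :&: X.
Proof.
move=> reachS SX IX I MI vI; elim: reachS SX => [|{}S u Ss _ IH extu] SX.
  by left; rewrite sub1set.
have [SI | shrink] := IH (subset_trans (subsetUl S Ss) SX); last by right.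
have [SsI | SsI] := boolP (Ss \subset I); first by left; rewrite subUset SI.
right; exists (exchange e I u); split; first exact: exchange_extending extu SsI.
have [[/onbhdP [_ [s sS esu]] _] _] := extu.
apply: exchange_proper IX _ (subsetP SI _ sS) _; last by rewrite e_sym.
by apply: (subsetP SX); rewrite inE sS.
Qed.

(* Iterating the descent (on the size of I :&: X): if v lies in an MWIS I,
   then either the final set X is inside I, or some MWIS avoids v and meets
   X only inside I. *)
Lemma reach_MWIS v (X : {set T}) : conf_reach e w v X ->
  forall I, MWIS e w I -> v \in I ->
  X \subset I \/ exists J, [/\ MWIS e w J, v \notin J & J :&: X \subset I :&: X].
Proof.
move=> reachX I; have IX := reach_independent reachX.
have [n] := ubnP #|I :&: X|; elim: n I => // n IH I size_I MI vI.
have [|[J [MJ JX]]] := reach_descent reachX (subxx X) IX MI vI; first by left.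
right; have JI := proper_sub JX.
have [vJ | vJ] := boolP (v \in J); last by exists J.
have size_J : (#|J :&: X| < n)%N.
  by apply: leq_trans (proper_card JX) _; rewrite -ltnS.
case: (IH J size_J MJ vJ) => [XJ | [K [MK vK KX]]].
  have [_ [x /setIP [_ xX] xJ]] := properP JX.
  by move: xJ; rewrite inE xX (subsetP XJ _ xX).
by exists K; split=> //; apply: subset_trans JI.
Qed.

Lemma MWIS_avoiding v (S I : {set T}) : conf_reach e w v S ->
  MWIS e w I -> ~~ (S \subset I) -> exists J, MWIS e w J /\ v \notin J.
Proof.
move=> reachS MI SI; have [vI | vI] := boolP (v \in I); last by exists I.
case: (reach_MWIS reachS MI vI) => [SI' | [J [MJ vJ _]]]; last by exists J.
by rewrite SI' in SI.
Qed.

Lemma MWIS_avoiding_pair v u (X I : {set T}) : conf_reach e w v X ->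
  u \in X -> MWIS e w I -> v \in I -> u \notin I ->
  exists J, [/\ MWIS e w J, u \notin J & v \notin J].
Proof.
move=> reachX uX MI vI uI.
have [XI | [J [MJ vJ JX]]] := reach_MWIS reachX MI vI.
  by move: uI; rewrite (subsetP XI _ uX).
exists J; split=> //; apply/negP => uJ.
by move: uI; have /(subsetP JX)/setIP [-> _] : u \in J :&: X by rewrite inE uJ.
Qed.

End Descent.

Section Confinement.
Variables (T : finType) (R : realFieldType) (e : rel T) (w : T -> R).
Hypotheses (e_sym : symmetric e) (e_irr : irreflexive e).
Hypothesis w_pos : forall x, 0 < w x.

(* Exchanging the unconfining child u into an MWIS containing S_v removes a
   vertex of S_v, so the descent lemma applies to the new MWIS. *)
Lemma unconfined_MWIS_avoiding v (S : {set T}) :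
  unconfined_run e w v S -> exists J, MWIS e w J /\ v \notin J.
Proof.
move=> [[reachS _] [u [childu le_u]]].
have [I MI] := MWIS_exists e w.
have [SI | SI] := boolP (S \subset I); last exact: MWIS_avoiding reachS MI SI.
have MIu := exchange_unconfined e_sym e_irr MI SI childu le_u.
apply: (MWIS_avoiding e_sym e_irr reachS MIu); apply/negP => /subsetP SIu.
have [/onbhdP [_ [s sS esu]] _] := childu.
by move: (SIu _ sS); apply/negP/exchange_drops; rewrite // e_sym.
Qed.

Lemma alpha_w_delete v (K : {set T}) :
  MWIS e w K -> v \notin K -> alpha_w e w [set~ v] = alpha_w e w [set: T].
Proof.
move=> MK vK; rewrite !(alpha_w_MWIS w_pos MK) ?subsetT //.
by apply/subsetP => x xK; rewrite !inE; apply: contraNneq vK => <-.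
Qed.

Lemma confined_dichotomy v (S : {set T}) : conf_reach e w v S ->
  sheathed e w v \/ forall I, MWIS e w I -> S \subset I.
Proof.
move=> reachS; case: (classic (exists J, MWIS e w J /\ v \notin J)).
  by move=> [J [MJ vJ]]; left; apply: sheathed_of_MWIS MJ vJ.
move=> none; right => I MI; apply/negPn/negP => SI.
exact/none/(MWIS_avoiding e_sym e_irr reachS MI SI).
Qed.

(* Part (b), second claim: if u lies in the set reached from v and v in the
   set reached from u, then {u, v} lies in an MWVC (when some MWIS misses
   both) or in every MWIS (otherwise). *)
Lemma mutual_simultaneous v u (Sv Su : {set T}) :
  conf_reach e w v Sv -> u \in Sv -> conf_reach e w u Su -> v \in Su ->
  simultaneous e w [set u; v].
Proof.
move=> reachv uSv reachu vSu.
case: (classic (exists J, [/\ MWIS e w J, u \notin J & v \notin J])).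
  move=> [J [MJ uJ vJ]]; right; exists (~: J); split; first exact: MWIS_setC.
  by apply/subsetP => x /set2P [] ->; rewrite inE.
move=> none; left; have [I MI] := MWIS_exists e w; exists I; split=> //.
have [uI | uI] := boolP (u \in I); have [vI | vI] := boolP (v \in I).
- by apply/subsetP => x /set2P [] ->.
- have [J [MJ vJ uJ]] := MWIS_avoiding_pair e_sym e_irr reachu vSu MI uI vI.
  by case: none; exists J.
- by case: none; apply: (MWIS_avoiding_pair e_sym e_irr reachv uSv MI vI uI).
- by case: none; exists I.
Qed.

End Confinement.

Theorem corollary3p3 (T : finType) (R : realFieldType) (e : rel T) (w : T -> R)
  (e_sym : symmetric e) (e_irr : irreflexive e) (w_pos : forall x, 0 < w x)
  (v : T) :
  (forall S, unconfined_run e w v S ->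
     sheathed e w v /\ alpha_w e w [set~ v] = alpha_w e w [set: T]) /\
  (forall Sv, confined_run e w v Sv ->
     (sheathed e w v \/ (forall I, MWIS e w I -> Sv \subset I)) /\
     (forall u Su, u \in Sv -> confined_run e w u Su -> v \in Su ->
        simultaneous e w [set u; v])).
Proof.
split=> [S unconf | Sv [[reachv _] _]].
  have [K [MK vK]] := unconfined_MWIS_avoiding e_sym e_irr unconf.
  by split; [exact: sheathed_of_MWIS MK vK | exact: (alpha_w_delete w_pos MK vK)].
split; first exact: confined_dichotomy reachv.
move=> u Su uSv [[reachu _] _] vSu.
exact: (mutual_simultaneous e_sym e_irr reachv uSv reachu vSu).
Qed.
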